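(* Let $\Lambda$ be a finite non-uniform $m\times k$ rectangular grid with $m\geq 3$ and $k\geq 3$, and let $G$ be the graph produced by the construction described in the context. Then every missing edge that has an endpoint which is a boundary vertex of $\Lambda$ lies in a $2$-cell face of $G$.
   Context: $\Lambda$ has horizontal lines $h_1,\dots,h_m$ (bottom to top) and vertical lines $v_1,\dots,v_k$ (left to right) with arbitrary spacings; $p_{i,j}=h_i\cap v_j$. Its edges are the segments $p_{i,j}p_{i+1,j}$ and $p_{i,j}p_{i,j+1}$. Vertices on $h_1,h_m,v_1,v_k$ are boundary vertices; an edge with both endpoints boundary vertices is a boundary edge, all others are internal. The horizontal slab $H_i$ ($1\le i<m$) is the strip between $h_i,h_{i+1}$; the vertical slab $V_j$ ($1\le j<k$) is the strip between $v_j,v_{j+1}$; the width of a slab is the distance between its bounding lines. The red edges are $(p_{i,j},p_{i+1,j})$ and $(p_{i,j},p_{i,j+1})$ for $2\le i\le m-1$, $2\le j\le k-1$ with $i,j$ both even or both odd; all other internal edges are blue. Construction: let $G'$ be $\Lambda$ with all red edges removed, and $E'=\emptyset$. Iterate over the slabs $H_1,\dots,H_{m-1},V_1,\dots,V_{k-1}$ in non-decreasing order of width; for the current slab, consider the red edges lying in it (in any order); a red edge $(a,b)$ is added to $E'$ if both $a$ and $b$ currently have degree exactly $2$ in $G'\cup E'$. Finally $G=G'\cup E'$ (a plane straight-line graph). A missing edge is a red edge not in $G$. A cell of $\Lambda$ is a rectangle bounded by two consecutive horizontal and two consecutive vertical lines; a $2$-cell face of $G$ is a bounded face of $G$ that is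 the union of exactly two cells. *)

From mathcomp Require Import all_boot all_order all_algebra.
Set Implicit Arguments. Unset Strict Implicit. Unset Printing Implicit Defensive.
Import Order.TTheory GRing.Theory Num.Theory.

(* Vertices p_{i,j} are 0-indexed: (i, j) : 'I_m * 'I_k, i = row (horizontal line
   h_{i+1}), j = column (vertical line v_{j+1}). *)
Notation vtx m k := ('I_m * 'I_k)%type.
(* An edge is an oriented pair (u, v) with v the right or upper neighbour of u. *)
Notation edge m k := (vtx m k * vtx m k)%type.
(* Slab inl a = H_{a+1} (between rows a and a+1), inr b = V_{b+1}. *)
Notation slab m k := ('I_m.-1 + 'I_k.-1)%type.
(* Cell (a, b) = rectangle with corners rows a,a+1 and columns b,b+1. *)
Notation cell m k := ('I_m.-1 * 'I_k.-1)%type.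

Definition gedge m k (e : edge m k) : bool :=
  let: (u, v) := e in
  ((u.1 == v.1) && (u.2.+1 == v.2 :> nat)) || ((u.2 == v.2) && (u.1.+1 == v.1 :> nat)).

Definition bvtx m k (u : vtx m k) : bool :=
  [|| (u.1 == 0 :> nat), (u.1 == m.-1 :> nat), (u.2 == 0 :> nat) | (u.2 == k.-1 :> nat)].

(* red edges: lower/left endpoint p_{i,j} with 2<=i<=m-1, 2<=j<=k-1 (1-indexed),
   i, j of equal parity *)
Definition red m k (e : edge m k) : bool :=
  [&& gedge e, 0 < e.1.1 < m.-1, 0 < e.1.2 < k.-1 & odd e.1.1 == odd e.1.2].

Definition Gprime m k : {set edge m k} := [set e | gedge e && ~~ red e].

Definition deg m k (E : {set edge m k}) (x : vtx m k) : nat :=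
  #|[set e in E | (e.1 == x) || (e.2 == x)]|.

Definition step m k (E : {set edge m k}) (e : edge m k) : {set edge m k} :=
  if (deg (Gprime m k :|: E) e.1 == 2) && (deg (Gprime m k :|: E) e.2 == 2)
  then e |: E else E.

Definition Eprime m k (order : seq (edge m k)) : {set edge m k} :=
  foldl (@step m k) set0 order.

Definition Gfinal m k (order : seq (edge m k)) : {set edge m k} :=
  Gprime m k :|: Eprime order.

Definition in_slab m k (s : slab m k) (e : edge m k) : bool :=
  match s with
  | inl a => (e.1.1 == a :> nat) && (e.1.2 == e.2.2)
  | inr b => (e.1.2 == b :> nat) && (e.1.1 == e.2.1)
  end.

Definition red_in m k (s : slab m k) : seq (edge m k) :=
  [seq e <- enum [set: edge m k] | red e && in_slab s e].

(* hpos i = y-coordinate of h_{i+1}, vpos j = x-coordinate of v_{j+1} *)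
Definition width (R : numDomainType) m k (hpos vpos : nat -> R) (s : slab m k) : R :=
  match s with
  | inl a => hpos a.+1 - hpos a
  | inr b => vpos b.+1 - vpos b
  end.

(* faces of a subgraph of Lambda containing all boundary edges:
   cells glued along missing grid edges *)
Definition corner m k (c : cell m k) (v : vtx m k) : bool :=
  ((v.1 == c.1 :> nat) || (v.1 == c.1.+1 :> nat)) &&
  ((v.2 == c.2 :> nat) || (v.2 == c.2.+1 :> nat)).

Definition borders m k (c : cell m k) (e : edge m k) : bool :=
  corner c e.1 && corner c e.2.

Definition cell_adj m k (G : {set edge m k}) : rel (cell m k) :=
  fun c d => (c != d) &&
    [exists e : edge m k, [&& gedge e, e \notin G, borders c e & borders d e]].

Definition face m k (G : {set edge m k}) (c : cell m k) : {set cell m k} :=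
  [set d | connect (cell_adj G) c d].

Definition in_2cell_face m k (G : {set edge m k}) (e : edge m k) : bool :=
  [exists c : cell m k, borders c e && (#|face G c| == 2)].

From mathcomp Require Import all_boot all_order all_algebra zify.
Import Order.TTheory GRing.Theory Num.Theory.

Set Implicit Arguments.
Unset Strict Implicit.
Unset Printing Implicit Defensive.

(** Every red edge starts at an interior vertex whose coordinates have equal parity, so a
    red edge with a boundary endpoint ends on the top row or on the right column; transposing
    the grid reduces the second case to the first.  So let [e] go up from [u] to a vertex [w]
    of the top row.  No other red edge meets [w], whose two boundary edges are blue, so [w]
    has degree 2 whenever [e] is examined.  At [u] the two blue edges come from the left and
    from below, and the only red edges are [e] and the edge [r] to the right of [u].  Hence
    [e] can only have been rejected because [r] was already added.  The two cells beside [e]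
    are then bounded by edges of [G] apart from [e] itself (their other sides are blue, lie on
    the top boundary, or are [r]), so they form a 2-cell face. *)

Definition incident m k (e : edge m k) (x : vtx m k) := (e.1 == x) || (e.2 == x).

Definition addable m k (E : {set edge m k}) (e : edge m k) :=
  (deg (Gprime m k :|: E) e.1 == 2) && (deg (Gprime m k :|: E) e.2 == 2).

Lemma ord_eqE n (x y : 'I_n) : (x == y) = (x == y :> nat).
Proof. by []. Qed.

Lemma cornerE m k (c : cell m k) (v : vtx m k) :
  corner c v = (c.1 <= v.1 <= c.1.+1) && (c.2 <= v.2 <= c.2.+1).
Proof. by rewrite /corner; case: v => [[i ?] [j ?]] /=; congr (_ && _); lia. Qed.

Lemma odd_eq_mod2 a b : (odd a == odd b) = (a %% 2 == b %% 2).
Proof. by rewrite !modn2; case: (odd a); case: (odd b). Qed.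

(* [grid_lia] proves quantifier-free facts about grid coordinates: ordinals become bounded
   naturals, parities become residues mod 2 (on which [lia] is much faster than on [odd]),
   and hypotheses are split and substituted before calling [lia].  Hypotheses are reverted
   in two rounds since those justifying an [Ordinal] in another one can only be reverted
   once [grid_simpl] has removed it. *)
Ltac grid_simpl :=
  unfold incident, Gprime, red, gedge, bvtx, borders;
  rewrite ?cornerE /= ?inE /= ?xpair_eqE ?ord_eqE ?odd_eq_mod2 /= ?(negb_and, negb_or).

Ltac grid_lia :=
  intros;
  repeat match goal with p : ?T |- _ =>
    lazymatch eval hnf in T with prod ?A ?B =>
      let A' := eval hnf in A in let B' := eval hnf in B in
      change (A' * B')%type in p; destruct p end end;
  repeat match goal with H : @eq (prod _ _) _ _ |- _ => injection H; clear H; intros end;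
  subst;
  grid_simpl;
  do 2 (repeat match goal with H : ?P |- _ =>
    match type of P with Prop => assert_succeeds (clear H); revert H end end;
    grid_simpl);
  repeat match goal with x : ordinal _ |- _ =>
    move: (ltn_ord x); generalize (nat_of_ord x); clear x end;
  intros;
  repeat match goal with
  | H : is_true (_ && _) |- _ => case/andP: H => ??
  | H : is_true (_ || _) |- _ => case/orP: H => ?
  | H : is_true (?x == ?y) |- _ => is_var x; move/eqP: H => H; subst x
  | H : is_true (?y == ?x) |- _ => is_var x; move/eqP: H => H; subst x
  end;
  lia.

Lemma connect_closed_sub (T : finType) (r : rel T) (A : {pred T}) x y :
  (forall x y, x \in A -> r x y -> y \in A) -> x \in A -> connect r x y -> y \in A.
Proof.
move=> A_closed x_A /connectP[p]; elim: p x x_A => [|z p IHp] x x_A /=.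
  by move=> _ ->.
by case/andP=> xz zp; apply: IHp zp; apply: A_closed xz.
Qed.

Lemma card_eq2 (T : finType) (P : pred T) x y : x != y -> P x -> P y ->
  (forall z, P z -> (z == x) || (z == y)) -> #|[set z | P z]| = 2.
Proof.
move=> xy Px Py P_xy; transitivity #|[set x; y]|; last by rewrite cards2 xy.
apply: eq_card => z; rewrite !inE; apply/idP/idP; first exact: P_xy.
by case/orP=> /eqP->.
Qed.

Lemma homo_connect (T T' : finType) (r : rel T) (r' : rel T') (f : T -> T') x y :
  (forall x y, r x y -> r' (f x) (f y)) -> connect r x y -> connect r' (f x) (f y).
Proof.
move=> f_homo /connectP[p xp ->]; apply/connectP; exists (map f p); last by rewrite last_map.
exact: homo_path xp.
Qed.

Lemma connect_bij (T T' : finType) (r : rel T) (r' : rel T') (f : T -> T') (g : T' -> T) :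
  cancel f g -> cancel g f -> (forall x y, r' (f x) (f y) = r x y) ->
  forall x y, connect r' (f x) (f y) = connect r x y.
Proof.
move=> fK gK f_mono x y; apply/idP/idP; last by apply: homo_connect => ? ?; rewrite f_mono.
rewrite -{2}(fK x) -{2}(fK y); apply: homo_connect => x' y'.
by rewrite -{1}(gK x') -{1}(gK y') f_mono.
Qed.

Section Construction.

Variables m k : nat.
Implicit Types (E G : {set edge m k}) (e r x : edge m k) (s : seq (edge m k)).

Lemma stepE E e : step E e = if addable E e then e |: E else E.
Proof. by []. Qed.

Lemma subset_step E e : E \subset step E e.
Proof. by rewrite stepE; case: ifP => _; [apply: subsetUr | apply: subxx]. Qed.

Lemma subset_foldl_step s E : E \subset foldl (@step m k) E s.
Proof. by elim: s E => //= e s IHs E; apply: subset_trans (subset_step E e) (IHs _). Qed.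

Lemma foldl_step_subU s E : foldl (@step m k) E s \subset E :|: [set x in s].
Proof.
elim: s E => [|e s IHs] E /=; first exact: subsetUl.
apply: subset_trans (IHs _) _; apply/subsetP => x.
by rewrite stepE !inE; case: ifP => _; rewrite ?inE; case: (x == e); rewrite ?orbT.
Qed.

Lemma foldl_step_rejected s E0 e : e \in s -> e \notin foldl (@step m k) E0 s ->
  exists2 E : {set edge m k}, E \subset foldl (@step m k) E0 s & ~~ addable E e.
Proof.
elim: s E0 => //= x s IHs E0; rewrite inE => /predU1P[<- | e_s] e_rej; last exact: IHs.
exists E0; first exact: subset_trans (subset_step E0 e) (subset_foldl_step _ _).
apply: contra e_rej => add_e; apply: subsetP (subset_foldl_step _ _) _ _.
by rewrite stepE add_e setU11.
Qed.

Lemma deg_setU_nonincident G E v :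
  {in E, forall r, ~~ incident r v} -> deg (G :|: E) v = deg G v.
Proof.
move=> E_far; apply: eq_card => r; rewrite !inE -/(incident r v).
by case: (boolP (r \in E)) => [/E_far /negbTE ->| _]; rewrite ?andbF ?orbF.
Qed.

Lemma in_2cell_face_isolated G e : gedge e -> e \notin G -> #|[set c | borders c e]| = 2 ->
  (forall c x, borders c e -> borders c x -> gedge x -> x \notin G -> x = e) ->
  in_2cell_face G e.
Proof.
move=> e_grid e_missing card_e isolated; set A := [set c | borders c e].
have [c1 c1e] : exists c1, borders c1 e.
  have /set0Pn[c] : A != set0 by rewrite -card_gt0 card_e.
  by rewrite inE; exists c.
suff face_c1 : face G c1 = A by apply/existsP; exists c1; rewrite c1e face_c1 card_e.
apply/setP => d; rewrite /face inE; apply/idP/idP => [c1d | de].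
  apply: (connect_closed_sub (A := A)) c1d; last by rewrite inE.
  move=> c c'; rewrite !inE => ce /andP[_ /existsP[x /and4P[x_grid x_missing cx c'x]]].
  by rewrite -(isolated c x).
have [<- | c1d] := eqVneq c1 d; first exact: connect0.
apply: connect1; rewrite /cell_adj c1d; apply/existsP; exists e.
by rewrite inE in de; rewrite e_grid e_missing c1e de.
Qed.

End Construction.

Section Geometry.

Variables m k : nat.
Implicit Types (e r x : edge m k) (c : cell m k).

Lemma red_boundary_end e : red e -> bvtx e.1 || bvtx e.2 ->
  (e.2.1 == m.-1 :> nat) || (e.2.2 == k.-1 :> nat).
Proof. grid_lia. Qed.

Lemma gedge_same_start e r x : gedge e -> gedge r -> gedge x ->
  r.1 = e.1 -> x.1 = e.1 -> r != e -> (x == e) || (x == r).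
Proof. grid_lia. Qed.

Lemma red_incident_start e r : red e -> red r -> incident r e.1 -> r.1 = e.1.
Proof. by intros; apply/eqP; grid_lia. Qed.

Lemma red_incident_top_end e r :
  red e -> e.2.1 = m.-1 :> nat -> red r -> incident r e.2 -> r = e.
Proof. by intros; apply/eqP; grid_lia. Qed.

Lemma red_beside_top_start e c x : red e -> e.2.1 = m.-1 :> nat ->
  borders c e -> borders c x -> red x -> x.1 = e.1.
Proof. by intros; apply/eqP; grid_lia. Qed.

Lemma deg_Gprime_red_start e : red e -> deg (Gprime m k) e.1 = 2.
Proof.
case: e => [[a b] v] e_red /=.
have a' : a.-1 < m := leq_ltn_trans (leq_pred a) (ltn_ord a).
have b' : b.-1 < k := leq_ltn_trans (leq_pred b) (ltn_ord b).
by apply: (@card_eq2 _ _ ((Ordinal a', b), (a, b)) ((a, Ordinal b'), (a, b))); grid_lia.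
Qed.

Lemma deg_Gprime_top_end e : red e -> e.2.1 = m.-1 :> nat -> deg (Gprime m k) e.2 = 2.
Proof.
case: e => [u [c d]] e_red e_top /=.
have d' : d.-1 < k := leq_ltn_trans (leq_pred d) (ltn_ord d).
have d'' : d.+1 < k by grid_lia.
by apply: (@card_eq2 _ _ ((c, Ordinal d'), (c, d)) ((c, d), (c, Ordinal d''))); grid_lia.
Qed.

Lemma card_borders_red e : red e -> #|[set c | borders c e]| = 2.
Proof.
case: e => [[a b] [a2 b2]] e_red.
have a0 : a < m.-1 by grid_lia.
have b0 : b < k.-1 by grid_lia.
have a1 : a.-1 < m.-1 by grid_lia.
have b1 : b.-1 < k.-1 by grid_lia.
have [vertical | horizontal] : b2 = b :> nat \/ a2 = a :> nat by grid_lia.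
  by apply: (@card_eq2 _ _ (Ordinal a0, Ordinal b1) (Ordinal a0, Ordinal b0)); grid_lia.
by apply: (@card_eq2 _ _ (Ordinal a1, Ordinal b0) (Ordinal a0, Ordinal b0)); grid_lia.
Qed.

Lemma missing_top_edge_in_2cell_face (s : seq (edge m k)) e :
  all (@red m k) s -> e \in s -> red e -> e \notin Gfinal s -> e.2.1 = m.-1 :> nat ->
  in_2cell_face (Gfinal s) e.
Proof.
move=> s_red e_s e_red e_missing e_top.
have e_rejected : e \notin Eprime s by apply: contra e_missing; rewrite inE => ->; rewrite orbT.
have [E E_sub e_blocked] := foldl_step_rejected e_s e_rejected.
have E_red : {in E, forall r, red r}.
  move=> r /(subsetP E_sub) /(subsetP (foldl_step_subU _ _)).
  by rewrite !inE => /(allP s_red).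
have e_notin_E : e \notin E by apply: contra e_rejected; apply: (subsetP E_sub).
(* [e] is the only red edge at [e.2], so [e] was rejected because of its lower end. *)
have [r r_E r_at_e1] : exists2 r, r \in E & incident r e.1.
  apply/exists_inP; apply: contraR e_blocked => /exists_inPn E_far_e1.
  have E_far_e2 : {in E, forall r, ~~ incident r e.2}.
    move=> r r_E; apply: contraNN e_notin_E => r_at_e2.
    by rewrite -(red_incident_top_end e_red e_top (E_red r r_E) r_at_e2).
  by rewrite /addable !deg_setU_nonincident // deg_Gprime_red_start // deg_Gprime_top_end.
have r_G : r \in Gfinal s by rewrite inE (subsetP E_sub r r_E) orbT.
have r_start : r.1 = e.1 := red_incident_start e_red (E_red r r_E) r_at_e1.
have r_ne_e : r != e by apply: contraNneq e_notin_E => <-.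
have [e_grid _ _ _] := and4P e_red.
apply: in_2cell_face_isolated => // [|c x ce cx x_grid x_missing].
  exact: card_borders_red.
have x_red : red x.
  by apply: contraNT x_missing => x_blue; rewrite !inE x_grid x_blue.
have x_start := red_beside_top_start e_red e_top ce cx x_red.
have [r_grid _ _ _] := and4P (E_red r r_E).
case/orP: (gedge_same_start e_grid r_grid x_grid r_start x_start r_ne_e) => /eqP // x_r.
by rewrite x_r r_G in x_missing.
Qed.

End Geometry.

Definition vtx_tr {m k} (u : vtx m k) : vtx k m := (u.2, u.1).
Definition edge_tr {m k} (e : edge m k) : edge k m := (vtx_tr e.1, vtx_tr e.2).
Definition cell_tr {m k} (c : cell m k) : cell k m := (c.2, c.1).

Lemma vtx_trK m k : cancel (@vtx_tr m k) vtx_tr. Proof. by case. Qed.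
Lemma edge_trK m k : cancel (@edge_tr m k) edge_tr. Proof. by case=> [[a b] [c d]]. Qed.
Lemma cell_trK m k : cancel (@cell_tr m k) cell_tr. Proof. by case. Qed.

Lemma vtx_tr_inj m k : injective (@vtx_tr m k). Proof. exact: can_inj (@vtx_trK m k). Qed.
Lemma edge_tr_inj m k : injective (@edge_tr m k). Proof. exact: can_inj (@edge_trK m k). Qed.
Lemma cell_tr_inj m k : injective (@cell_tr m k). Proof. exact: can_inj (@cell_trK m k). Qed.

Section TransposeTheory.

Variables m k : nat.
Implicit Types (G E : {set edge m k}) (e : edge m k) (u : vtx m k) (c : cell m k).

Lemma mem_edge_tr (A : {pred edge m k}) e : (edge_tr e \in edge_tr @: A) = (e \in A).
Proof. exact/mem_imset/edge_tr_inj. Qed.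

Lemma mem_cell_tr (A : {pred cell m k}) c : (cell_tr c \in cell_tr @: A) = (c \in A).
Proof. exact/mem_imset/cell_tr_inj. Qed.

Lemma gedge_tr e : gedge (edge_tr e) = gedge e.
Proof. by case: e => [[a b] [c d]]; rewrite /gedge /= orbC. Qed.

Lemma red_tr e : red (edge_tr e) = red e.
Proof. by rewrite /red gedge_tr; congr (_ && _); rewrite /= andbCA eq_sym. Qed.

Lemma Gprime_tr : Gprime k m = edge_tr @: Gprime m k.
Proof.
by apply/setP => f; rewrite -[f](@edge_trK k m) mem_edge_tr !inE gedge_tr red_tr.
Qed.

Lemma deg_tr G u : deg (edge_tr @: G) (vtx_tr u) = deg G u.
Proof.
rewrite /deg -(card_imset _ (@edge_tr_inj m k)); apply: eq_card => f.
by rewrite -[f](@edge_trK k m) mem_edge_tr !inE mem_edge_tr /= !(inj_eq (@vtx_tr_inj m k)).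
Qed.

Lemma step_tr E e : step (edge_tr @: E) (edge_tr e) = edge_tr @: step E e.
Proof.
by rewrite !stepE /addable Gprime_tr -imsetU !deg_tr; case: ifP; rewrite ?imsetU1.
Qed.

Lemma Gfinal_tr (s : seq (edge m k)) : Gfinal (map edge_tr s) = edge_tr @: Gfinal s.
Proof.
have foldl_tr E : foldl (@step k m) (edge_tr @: E) (map edge_tr s) =
                  edge_tr @: foldl (@step m k) E s.
  by elim: s E => //= e s IHs E; rewrite step_tr IHs.
by rewrite /Gfinal /Eprime -(imset0 edge_tr) foldl_tr Gprime_tr imsetU.
Qed.

Lemma corner_tr c u : corner (cell_tr c) (vtx_tr u) = corner c u.
Proof. by rewrite /corner /= andbC. Qed.

Lemma borders_tr c e : borders (cell_tr c) (edge_tr e) = borders c e.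
Proof. by rewrite /borders !corner_tr. Qed.

Lemma cell_adj_tr G c d :
  cell_adj (edge_tr @: G) (cell_tr c) (cell_tr d) = cell_adj G c d.
Proof.
rewrite /cell_adj (inj_eq (@cell_tr_inj m k)); congr (_ && _).
apply/existsP/existsP => [[f] | [f]].
  by rewrite -[f](@edge_trK k m) gedge_tr mem_edge_tr !borders_tr; exists (edge_tr f).
by exists (edge_tr f); rewrite gedge_tr mem_edge_tr !borders_tr.
Qed.

Lemma face_tr G c : face (edge_tr @: G) (cell_tr c) = cell_tr @: face G c.
Proof.
apply/setP => d; rewrite -[d](@cell_trK k m) mem_cell_tr !inE.
exact: (connect_bij (@cell_trK m k) (@cell_trK k m) (cell_adj_tr G)).
Qed.

Lemma in_2cell_face_tr G e : in_2cell_face (edge_tr @: G) (edge_tr e) = in_2cell_face G e.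
Proof.
rewrite /in_2cell_face; apply/existsP/existsP => [[c] | [c]].
  rewrite -[c](@cell_trK k m) borders_tr face_tr (card_imset _ (@cell_tr_inj m k)).
  by exists (cell_tr c).
by exists (cell_tr c); rewrite borders_tr face_tr (card_imset _ (@cell_tr_inj m k)).
Qed.

End TransposeTheory.

Lemma red_in_slab m k (e : edge m k) : red e -> exists t : slab m k, in_slab t e.
Proof.
case: e => [[a b] [c d]] e_red.
have a_lt : a < m.-1 by grid_lia.
have b_lt : b < k.-1 by grid_lia.
have [vertical | horizontal] : d = b :> nat \/ c = a :> nat by grid_lia.
  by exists (inl (Ordinal a_lt)); rewrite /in_slab /=; grid_lia.
by exists (inr (Ordinal b_lt)); rewrite /in_slab /=; grid_lia.
Qed.

Lemma mem_slab_order m k (so : seq (slab m k)) (eo : slab m k -> seq (edge m k)) e :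
  perm_eq so (enum [set: slab m k]) -> (forall t, perm_eq (eo t) (red_in t)) ->
  (e \in flatten (map eo so)) = red e.
Proof.
move=> so_all eo_red; apply/flatten_mapP/idP => [[t _] | e_red].
  by rewrite (perm_mem (eo_red t)) mem_filter => /andP[/andP[]].
have [t e_t] := red_in_slab e_red.
exists t; first by rewrite (perm_mem so_all) mem_enum inE.
by rewrite (perm_mem (eo_red t)) mem_filter e_red e_t mem_enum inE.
Qed.

Local Open Scope ring_scope.

Theorem lemma3 (R : realFieldType) (m k : nat) (hm : (3 <= m)%N) (hk : (3 <= k)%N)
  (hpos vpos : nat -> R)
  (Hh : forall i : nat, (i.+1 < m)%N -> hpos i < hpos i.+1)
  (Hv : forall j : nat, (j.+1 < k)%N -> vpos j < vpos j.+1)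
  (so : seq (slab m k)) (eo : slab m k -> seq (edge m k))
  (Hso : perm_eq so (enum [set: slab m k]))
  (Hsorted : sorted (fun s t => width hpos vpos s <= width hpos vpos t) so)
  (Heo : forall s, perm_eq (eo s) (red_in s))
  (e : edge m k) :
  red e -> e \notin Gfinal (flatten (map eo so)) ->
  bvtx e.1 || bvtx e.2 ->
  in_2cell_face (Gfinal (flatten (map eo so))) e.
Proof.
set s := flatten (map eo so).
have mem_s x : (x \in s) = red x := mem_slab_order x Hso Heo.
move=> e_red e_missing e_boundary.
have s_red : all (@red m k) s by apply/allP => x; rewrite mem_s.
case/orP: (red_boundary_end e_red e_boundary) => /eqP e_end.
  by apply: missing_top_edge_in_2cell_face; rewrite ?mem_s.
rewrite -in_2cell_face_tr -Gfinal_tr.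
apply: missing_top_edge_in_2cell_face; rewrite ?red_tr ?Gfinal_tr ?mem_edge_tr //.
  by rewrite all_map; apply/allP => x; rewrite /= red_tr mem_s.
by rewrite map_f ?mem_s.
Qed.
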